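(* Let $\lvert\psi\rangle\in(\mathbb{C}^d)^{\otimes n}$ be a unit vector with recursive Schmidt decomposition $\lvert\psi\rangle=\sum_{i=1}^{d^{n-1}}\sqrt{p_i}\,\lvert\phi_i\rangle$, where $p_i\ge0$, $\sum_ip_i=1$, and $\{\lvert\phi_i\rangle\}_{i=1}^{d^{n-1}}$ is a set of orthonormal product vectors in $(\mathbb{C}^d)^{\otimes n}$. Define $\rho:=\sum_{i=1}^{d^{n-1}}p_i\lvert\phi_i\rangle\langle\phi_i\rvert$. Then for every projector $\Pi$ acting on some subset $\mathcal{S}\subseteq\{1,\ldots,n\}$ of qudits with $|\mathcal{S}|=k$ (i.e. a projector on the qudits in $\mathcal{S}$ tensored with the identity on the rest), $\mathrm{Tr}(\Pi\rho)\ge\frac{1}{d^{k-1}}\mathrm{Tr}(\Pi\lvert\psi\rangle\langle\psi\rvert)$.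
   Context: Recursive Schmidt decomposition (RSD) of $\lvert\psi\rangle\in(\mathbb{C}^d)^{\otimes n}$ (with respect to the fixed qudit order $1,\ldots,n$): first write the Schmidt decomposition of $\lvert\psi\rangle$ across qudit $1$ versus qudits $2,\ldots,n$, $\lvert\psi\rangle=\sum_{i=1}^d\alpha_i\lvert w_i\rangle\lvert v_i\rangle$ (with $\alpha_i\ge 0$ and orthonormal $\{\lvert w_i\rangle\}$, $\{\lvert v_i\rangle\}$); then recursively replace each $\lvert v_i\rangle\in(\mathbb{C}^d)^{\otimes n-1}$ by its own Schmidt decomposition across its first qudit (qudit $2$) versus the remaining qudits, and so on, through qudit $n-1$. Expanding gives an expression $\lvert\psi\rangle=\sum_{i=1}^{d^{n-1}}\sqrt{p_i}\lvert\phi_i\rangle$ with each $\lvert\phi_i\rangle$ a tensor product of single-qudit vectors and $\sqrt{p_i}$ the product of the corresponding Schmidt coefficients. *)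

From HB Require Import structures.
From mathcomp Require Import all_boot all_order all_algebra.
Set Implicit Arguments. Unset Strict Implicit. Unset Printing Implicit Defensive.
Import Order.TTheory GRing.Theory Num.Theory.
Local Open Scope ring_scope.

Section Defs.
Variable C : numClosedFieldType.

Definition dotv (I : finType) (u v : I -> C) : C := \sum_(i : I) (u i)^* * v i.

Definition orthonormal (I J : finType) (f : I -> J -> C) : Prop :=
  forall i j, dotv (f i) (f j) = (i == j)%:R.

Variable d : nat.

(* A vector of (C^d)^{\otimes n}: a function of the n qudit labels. *)
Definition qvec (n : nat) := n.-tuple 'I_d -> C.

(* |w> \otimes |v> with |w> in C^d (first qudit) and |v> on the remaining n *)
Definition tens1 (n : nat) (w : 'I_d -> C) (v : qvec n) : qvec n.+1 :=
  fun x => w (thead x) * v (behead_tuple x).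

(* is_RSD m psi p phi : for psi on m.+1 qudits, the family
   (sqrt (p t), phi t), t ranging over m.-tuples (i_1,...,i_m) in [d]^m
   (so d^{n-1} terms, n = m.+1), is obtained from a recursive Schmidt
   decomposition of psi w.r.t. the qudit order 1..n:
   psi = sum_i alpha_i |w_i>|v_i>  (alpha_i >= 0, {w_i}, {v_i} orthonormal),
   each v_i recursively decomposed, and
   p (i::t) = alpha_i^2 * p_i t,  phi (i::t) = w_i (x) phi_i t. *)
Fixpoint is_RSD (m : nat) : qvec m.+1 -> (m.-tuple 'I_d -> C) ->
    (m.-tuple 'I_d -> qvec m.+1) -> Prop :=
  match m return qvec m.+1 -> (m.-tuple 'I_d -> C) ->
                 (m.-tuple 'I_d -> qvec m.+1) -> Prop with
  | 0 => fun psi p phi => forall t, p t = 1 /\ phi t = psi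
  | m'.+1 => fun psi p phi =>
      exists (alpha : 'I_d -> C) (w : 'I_d -> 'I_d -> C) (v : 'I_d -> qvec m'.+1),
        [/\ forall i, 0 <= alpha i,
            orthonormal w,
            orthonormal v,
            forall x, psi x = \sum_(i < d) alpha i * tens1 (w i) (v i) x &
            forall i, exists (p' : m'.-tuple 'I_d -> C)
                             (phi' : m'.-tuple 'I_d -> qvec m'.+1),
              is_RSD (v i) p' phi' /\
              forall t, p (@cons_tuple m' _ i t) = alpha i ^+ 2 * p' t /\
                        phi (@cons_tuple m' _ i t) = tens1 (w i) (phi' t)]
  end.

(* Operators on (C^d)^{\otimes n} as kernels A x y = <x|A|y>. *)
Definition trace_prod (n : nat) (A B : n.-tuple 'I_d -> n.-tuple 'I_d -> C) : C :=
  \sum_(x : n.-tuple 'I_d) \sum_(y : n.-tuple 'I_d) A x y * B y x.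

Definition proj_vec (n : nat) (psi : qvec n) : n.-tuple 'I_d -> n.-tuple 'I_d -> C :=
  fun x y => psi x * (psi y)^*.

Definition mix (n : nat) (I : finType) (p : I -> C) (phi : I -> qvec n) :=
  fun x y => \sum_(t : I) p t * (phi t x * (phi t y)^*).

Definition subconf (n : nat) (S : {set 'I_n}) :=
  {ffun {i : 'I_n | i \in S} -> 'I_d}.

Definition restr (n : nat) (S : {set 'I_n}) (x : n.-tuple 'I_d) : subconf S :=
  [ffun i => tnth x (val i)].

Definition is_projector (I : finType) (P : I -> I -> C) : Prop :=
  (forall a b, P a b = (P b a)^*) /\
  (forall a b, \sum_(c : I) P a c * P c b = P a b).

(* P on the qudits in S, tensored with the identity on the other qudits *)
Definition lift_op (n : nat) (S : {set 'I_n}) (P : subconf S -> subconf S -> C) :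
    n.-tuple 'I_d -> n.-tuple 'I_d -> C :=
  fun x y => P (restr S x) (restr S y) *
             [forall i : 'I_n, (i \notin S) ==> (tnth x i == tnth y i)]%:R.

End Defs.

From Pilot Require Import Defs.
From HB Require Import structures.
From mathcomp Require Import all_boot all_order all_algebra.
From mathcomp Require Import ring.
Set Implicit Arguments. Unset Strict Implicit. Unset Printing Implicit Defensive.
Import Order.TTheory GRing.Theory Num.Theory.
Local Open Scope ring_scope.

(* Generalize [Tr(Pi rho)] to the form [sum_t p t <phi_t|A|phi_t>] for any positive
   semidefinite operator [A] acting only on the qudits in [S], and induct on the
   number of qudits.  Write [psi = sum_i alpha_i w_i (x) v_i].  If the first qudit
   lies outside [S], or [S] is just the first qudit, the cross terms of
   [<psi|A|psi>] vanish by orthonormality of the [w_i], resp. the [v_i]; otherwise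
   Cauchy-Schwarz over the [d] Schmidt components costs a factor [d].  In every
   case each diagonal term [alpha_i^2 <w_i v_i|A|w_i v_i>] is a form in [v_i] of the
   compressed operator [<w_i|A|w_i>], which acts on [S] minus the first qudit and
   so is bounded by induction using the decomposition of [v_i]. *)

Section Kernels.
Variables (C : numClosedFieldType) (d : nat).

Local Notation tup n := (n.-tuple 'I_d).

Definition kern n := tup n -> tup n -> C.

Definition form n (A : kern n) (u v : tup n -> C) : C :=
  \sum_x \sum_y (u x)^* * A x y * v y.

Definition psd n (A : kern n) := forall u, 0 <= form A u u.

Lemma sum_delta (I : finType) (i0 : I) (F : I -> C) :
  \sum_i (i0 == i)%:R * F i = F i0.
Proof.
rewrite (bigD1 i0) //= eqxx mul1r big1 ?addr0 // => i hi.
by rewrite eq_sym (negbTE hi) mul0r.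
Qed.

Lemma sum_mul_const_eq0 (I : finType) (c K : I -> C) :
  (forall i j, K i = K j) -> \sum_i c i = 0 -> \sum_i c i * K i = 0.
Proof.
move=> hK hc; case: (pickP (@predT I)) => [i0 _|noI]; last first.
  by rewrite big1 // => i _; have := noI i.
rewrite (eq_bigr (fun i => c i * K i0)) => [|i _]; last by rewrite (hK i i0).
by rewrite -mulr_suml hc mul0r.
Qed.

Lemma sum_tuple0 (F : tup 0 -> C) : \sum_t F t = F [tuple].
Proof.
rewrite (eq_bigr (fun _ => F [tuple])) => [|t _]; last by rewrite tuple0.
by rewrite sumr_const card_tuple expn0.
Qed.

Lemma sum_tuple_cons n (F : tup n.+1 -> C) :
  \sum_x F x = \sum_(a : 'I_d) \sum_(t : tup n) F (cons_tuple a t).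
Proof.
rewrite pair_bigA /= (reindex (fun p : 'I_d * tup n => [tuple of p.1 :: p.2])) //=.
exists (fun x : tup n.+1 => (thead x, [tuple of behead x])) => [[a t] _|x _] /=.
  by congr (_, _); apply: val_inj.
by rewrite [in RHS](tuple_eta x).
Qed.

Section Form.
Variable n : nat.
Implicit Types (A B : kern n) (u v : tup n -> C).

Lemma form_ext A u u' v v' :
  (forall x, u x = u' x) -> (forall x, v x = v' x) -> form A u v = form A u' v'.
Proof.
by move=> hu hv; apply: eq_bigr => x _; apply: eq_bigr => y _; rewrite hu hv.
Qed.

Lemma form_kext A B u v : (forall x y, A x y = B x y) -> form A u v = form B u v.
Proof. by move=> h; apply: eq_bigr => x _; apply: eq_bigr => y _; rewrite h. Qed.

Lemma form_suml A (I : finType) (u : I -> tup n -> C) v :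
  form A (fun x => \sum_i u i x) v = \sum_i form A (u i) v.
Proof.
rewrite /form [RHS]exchange_big; apply: eq_bigr => x _.
rewrite [RHS]exchange_big; apply: eq_bigr => y _.
by rewrite rmorph_sum /= !mulr_suml.
Qed.

Lemma form_sumr A (I : finType) u (v : I -> tup n -> C) :
  form A u (fun y => \sum_i v i y) = \sum_i form A u (v i).
Proof.
rewrite /form [RHS]exchange_big; apply: eq_bigr => x _.
rewrite [RHS]exchange_big; apply: eq_bigr => y _.
by rewrite !mulr_sumr.
Qed.

Lemma form_scalel A c u v : form A (fun x => c * u x) v = c^* * form A u v.
Proof.
rewrite /form mulr_sumr; apply: eq_bigr => x _; rewrite mulr_sumr.
by apply: eq_bigr => y _; rewrite rmorphM /= !mulrA.
Qed.

Lemma form_scaler A c u v : form A u (fun x => c * v x) = c * form A u v.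
Proof.
rewrite /form mulr_sumr; apply: eq_bigr => x _; rewrite mulr_sumr.
by apply: eq_bigr => y _; ring.
Qed.

Lemma form_subB A u v :
  form A (fun x => u x - v x) (fun x => u x - v x) =
  form A u u + form A v v - (form A u v + form A v u).
Proof.
rewrite /form -!big_split -sumrB /=; apply: eq_bigr => x _.
rewrite -!big_split -sumrB /=; apply: eq_bigr => y _.
by rewrite rmorphB /=; ring.
Qed.

Lemma form_ksum (I : finType) (B : I -> kern n) (c : I -> C) u v :
  form (fun x y => \sum_i c i * B i x y) u v = \sum_i c i * form (B i) u v.
Proof.
rewrite /form.
under [RHS]eq_bigr => i _ do rewrite mulr_sumr.
rewrite [RHS]exchange_big; apply: eq_bigr => x _.
under [RHS]eq_bigr => i _ do rewrite mulr_sumr.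
rewrite [RHS]exchange_big; apply: eq_bigr => y _.
by rewrite mulr_sumr mulr_suml; apply: eq_bigr => i _; ring.
Qed.

Lemma form_kscale B c u v : form (fun x y => c * B x y) u v = c * form B u v.
Proof.
rewrite /form mulr_sumr; apply: eq_bigr => x _; rewrite mulr_sumr.
by apply: eq_bigr => y _; ring.
Qed.

Lemma form_sum_orthogonal A (I : finType) (y : I -> tup n -> C) :
  (forall i j, i != j -> form A (y i) (y j) = 0) ->
  form A (fun x => \sum_i y i x) (fun x => \sum_i y i x) = \sum_i form A (y i) (y i).
Proof.
move=> hy; rewrite form_suml; apply: eq_bigr => i _.
by rewrite form_sumr (bigD1 i) //= big1 ?addr0 // => j ji; apply: hy; rewrite eq_sym.
Qed.

(* Cauchy-Schwarz, from [0 <= \sum_(i, j) form A (y i - y j) (y i - y j)]. *)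
Lemma form_sum_le A (I : finType) (y : I -> tup n -> C) : psd A ->
  form A (fun x => \sum_i y i x) (fun x => \sum_i y i x) <=
  #|I|%:R * \sum_i form A (y i) (y i).
Proof.
move=> hA; set Q := fun i j => form A (y i) (y j).
have -> : form A (fun x => \sum_i y i x) (fun x => \sum_i y i x) = \sum_i \sum_j Q i j.
  by rewrite form_suml; apply: eq_bigr => i _; rewrite form_sumr.
have diff_ge0 : 0 <= \sum_i \sum_j (Q i i + Q j j - (Q i j + Q j i)).
  by apply: sumr_ge0 => i _; apply: sumr_ge0 => j _; rewrite -form_subB.
have diagE : \sum_(i : I) \sum_(j : I) Q i i = #|I|%:R * \sum_i Q i i.
  by rewrite mulr_sumr; apply: eq_bigr => i _; rewrite sumr_const mulr_natl.
move: diff_ge0.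
under eq_bigr => i _ do rewrite sumrB !big_split /=.
rewrite sumrB !big_split /= diagE [X in _ + X - _]exchange_big /= diagE.
rewrite [X in _ - (_ + X)]exchange_big /= -!mulr2n -mulrnBl pmulrn_lge0 //.
by rewrite subr_ge0.
Qed.

End Form.

Section FirstQudit.
Variable n : nat.
Implicit Types (A : kern n.+1) (w : 'I_d -> C) (f g : qvec C d n).

Definition kblock A a b : kern n :=
  fun x y => A (cons_tuple a x) (cons_tuple b y).

(* The partial matrix element [<w|A|w>] on the first qudit. *)
Definition kcompress A w : kern n :=
  fun x y => \sum_a \sum_b (w a)^* * w b * A (cons_tuple a x) (cons_tuple b y).

Lemma tens1_cons w f a (t : tup n) : tens1 w f (cons_tuple a t) = w a * f t.
Proof.
by rewrite /tens1 (_ : behead_tuple (cons_tuple a t) = t) //; apply: val_inj.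
Qed.

Lemma form_tens1 A w w' f g :
  form A (tens1 w f) (tens1 w' g) =
  \sum_a \sum_b (w a)^* * w' b * form (kblock A a b) f g.
Proof.
rewrite /form sum_tuple_cons; apply: eq_bigr => a _.
under eq_bigr => x _ do rewrite sum_tuple_cons.
rewrite exchange_big; apply: eq_bigr => b _.
rewrite mulr_sumr; apply: eq_bigr => x _; rewrite mulr_sumr; apply: eq_bigr => y _.
by rewrite !tens1_cons rmorphM /kblock /=; ring.
Qed.

Lemma form_kcompress A w f g :
  form (kcompress A w) f g = form A (tens1 w f) (tens1 w g).
Proof.
rewrite form_tens1 pair_bigA /= -(form_ksum (fun ab => kblock A ab.1 ab.2)).
by apply: form_kext => x y; rewrite /kcompress pair_bigA.
Qed.

Lemma psd_kcompress A w : psd A -> psd (kcompress A w).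
Proof. by move=> hA u; rewrite form_kcompress. Qed.

End FirstQudit.

Definition agree_off n (S : {set 'I_n}) (x y : tup n) : bool :=
  [forall i, (i \notin S) ==> (tnth x i == tnth y i)].

Definition agree_on n (S : {set 'I_n}) (x y : tup n) : Prop :=
  forall i, i \in S -> tnth x i = tnth y i.

(* [A] acts as the identity on the qudits outside [S]. *)
Definition local_to n (S : {set 'I_n}) (A : kern n) : Prop :=
  (forall x y, ~~ agree_off S x y -> A x y = 0) /\
  (forall x y x' y', agree_on S x x' -> agree_on S y y' ->
     agree_off S x y -> agree_off S x' y' -> A x y = A x' y').

Definition behead_set n (S : {set 'I_n.+1}) : {set 'I_n} :=
  [set j | lift ord0 j \in S].

Section Locality.
Variables (n : nat) (S : {set 'I_n.+1}).

Lemma card_behead_set : #|S| = ((ord0 \in S) + #|behead_set S|)%N.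
Proof.
rewrite -!sum1_card big_mkcond big_ord_recl /=; congr addn.
by rewrite [RHS]big_mkcond; apply: eq_bigr => j _; rewrite inE.
Qed.

Lemma card_behead_set_pred :
  #|S|.-1 = (((ord0 \in S) && (behead_set S != set0)) + #|behead_set S|.-1)%N.
Proof.
rewrite card_behead_set -cards_eq0.
by case: (ord0 \in S); case: #|behead_set S|.
Qed.

Lemma agree_off_cons a b (x y : tup n) :
  agree_off S (cons_tuple a x) (cons_tuple b y) =
  ((ord0 \in S) || (a == b)) && agree_off (behead_set S) x y.
Proof.
apply/forallP/andP => [H | [H0 /forallP H] i].
  split; first by have := H ord0; case: (ord0 \in S).
  by apply/forallP => j; have := H (lift ord0 j); rewrite !tnthS inE.
case: (unliftP ord0 i) => [j ->|->]; first by have := H j; rewrite !tnthS inE.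
by case: (ord0 \in S) H0.
Qed.

Lemma agree_on_cons a b (x y : tup n) :
  (ord0 \in S -> a = b) -> agree_on (behead_set S) x y ->
  agree_on S (cons_tuple a x) (cons_tuple b y).
Proof.
move=> hab hxy i; case: (unliftP ord0 i) => [j ->|-> /hab //].
by rewrite !tnthS => hj; apply: hxy; rewrite inE.
Qed.

Variable A : kern n.+1.
Hypothesis hA : local_to S A.

Lemma local_kcompress w : local_to (behead_set S) (kcompress A w).
Proof.
have [A0 Ainv] := hA; split=> [x y hxy|x y x' y' hx hy hxy hx'y'].
  rewrite /kcompress big1 // => a _; rewrite big1 // => b _.
  by rewrite A0 ?mulr0 // agree_off_cons (negbTE hxy) andbF.
apply: eq_bigr => a _; apply: eq_bigr => b _; congr (_ * _).
have [hab|hab] := boolP ((ord0 \in S) || (a == b)).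
  by apply: Ainv; rewrite ?agree_off_cons ?hab //; apply: agree_on_cons.
by rewrite !A0 // agree_off_cons (negbTE hab).
Qed.

Lemma form_tens1_notin_eq0 w w' f g :
  ord0 \notin S -> dotv w w' = 0 -> form A (tens1 w f) (tens1 w' g) = 0.
Proof.
have [A0 Ainv] := hA; move=> h0 ww'.
have blockE a b c x y : kblock A a b x y = (a == b)%:R * kblock A c c x y.
  rewrite /kblock; have [<-|ab] := eqVneq a b; last first.
    by rewrite mul0r A0 // agree_off_cons (negbTE h0) (negbTE ab).
  have [hxy|hxy] := boolP (agree_off (behead_set S) x y).
    by rewrite mul1r; apply: Ainv; rewrite ?agree_off_cons ?eqxx ?orbT //;
      apply: agree_on_cons => // /(negP h0).
  by rewrite !A0 ?mulr0 // agree_off_cons (negbTE hxy) andbF.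
have formE a b c : form (kblock A a b) f g = (a == b)%:R * form (kblock A c c) f g.
  by rewrite -form_kscale; apply: form_kext => x y; apply: blockE.
rewrite form_tens1.
under eq_bigr => a _ do under eq_bigr => b _ do rewrite (formE a b a) mulrCA.
under eq_bigr => a _ do rewrite sum_delta.
by apply: sum_mul_const_eq0 => [a a'|//]; rewrite (formE a a a') eqxx mul1r.
Qed.

Lemma form_tens1_single_eq0 w w' f g :
  ord0 \in S -> behead_set S = set0 -> dotv f g = 0 ->
  form A (tens1 w f) (tens1 w' g) = 0.
Proof.
have [A0 Ainv] := hA; move=> h0 S'0 fg.
have on0 x y : agree_on (behead_set S) x y by move=> i; rewrite S'0 in_set0.
have off0 x y : agree_off (behead_set S) x y = (x == y).
  apply/forallP/eqP => [H|<- i]; last by rewrite eqxx implybT.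
  by apply: eq_from_tnth => i; have := H i; rewrite S'0 in_set0 => /eqP.
have blockE a b x y z : kblock A a b x y = (x == y)%:R * kblock A a b z z.
  rewrite /kblock; have [<-|xy] := eqVneq x y; last first.
    by rewrite mul0r A0 // agree_off_cons h0 off0.
  rewrite mul1r; apply: Ainv; rewrite ?agree_off_cons ?h0 ?off0 ?eqxx //;
    exact: agree_on_cons (fun _ => erefl) (on0 _ _).
have formE a b : form (kblock A a b) f g = \sum_x (f x)^* * g x * kblock A a b x x.
  apply: eq_bigr => x _.
  rewrite (eq_bigr (fun y => (x == y)%:R * ((f x)^* * kblock A a b x x * g y))).
    by rewrite sum_delta mulrAC.
  by move=> y _; rewrite (blockE a b x y x); ring.
rewrite form_tens1 big1 // => a _; rewrite big1 // => b _.
rewrite formE sum_mul_const_eq0 ?mulr0 // => x y.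
by rewrite (blockE a b x x y) eqxx mul1r.
Qed.

Lemma form_schmidt_le (c : 'I_d -> C) (w : 'I_d -> 'I_d -> C) (v : 'I_d -> qvec C d n) :
  psd A -> Defs.orthonormal w -> Defs.orthonormal v ->
  form A (fun x => \sum_i c i * tens1 (w i) (v i) x)
         (fun x => \sum_i c i * tens1 (w i) (v i) x) <=
  d%:R ^+ ((ord0 \in S) && (behead_set S != set0)) *
    \sum_i form A (fun x => c i * tens1 (w i) (v i) x)
                  (fun x => c i * tens1 (w i) (v i) x).
Proof.
move=> hpsd hw hv; set y := fun i x => c i * tens1 (w i) (v i) x.
have [h0|h0] := boolP (ord0 \in S); last first.
  rewrite expr0 mul1r le_eqVlt (form_sum_orthogonal (y := y)) ?eqxx // => i j ij.
  by rewrite form_scalel form_scaler form_tens1_notin_eq0 ?mulr0 // hw (negbTE ij).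
have [S'0|_] := eqVneq (behead_set S) set0.
  rewrite expr0 mul1r le_eqVlt (form_sum_orthogonal (y := y)) ?eqxx // => i j ij.
  by rewrite form_scalel form_scaler form_tens1_single_eq0 ?mulr0 // hv (negbTE ij).
by rewrite expr1 -[in X in X%:R](card_ord d); apply: form_sum_le.
Qed.

End Locality.

Lemma form_le_rsd m (psi : qvec C d m.+1) p phi (S : {set 'I_m.+1}) (A : kern m.+1) :
  is_RSD psi p phi -> local_to S A -> psd A ->
  form A psi psi <= d%:R ^+ #|S|.-1 * \sum_t p t * form A (phi t) (phi t).
Proof.
elim: m => [|m IH] in psi p phi S A *.
  move=> hrsd _ _; rewrite sum_tuple0; have [-> ->] := hrsd [tuple].
  have -> : #|S|.-1 = 0%N.
    by have := max_card S; rewrite card_ord; case: #|S| => [|[]].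
  by rewrite expr0 !mul1r.
move=> [alpha [w [v [alpha_ge0 hw hv psiE hrec]]]] hA hpsd.
rewrite (form_ext _ psiE psiE).
apply: le_trans (form_schmidt_le hA alpha hpsd hw hv) _.
rewrite card_behead_set_pred exprD -mulrA ler_wpM2l ?exprn_ge0 ?ler0n //.
rewrite sum_tuple_cons mulr_sumr ler_sum // => i _.
have [p' [phi' [hrsd' pphiE]]] := hrec i.
rewrite form_scalel form_scaler -form_kcompress geC0_conj // mulrA -expr2.
under eq_bigr => t _ do
  rewrite (proj1 (pphiE t)) (proj2 (pphiE t)) -form_kcompress -mulrA.
rewrite -mulr_sumr mulrCA ler_wpM2l ?exprn_ge0 //.
exact: IH hrsd' (local_kcompress hA _) (psd_kcompress _ hpsd).
Qed.

Lemma psd_herm_idem n (A : kern n) :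
  (forall x y, A y x = (A x y)^*) -> (forall x y, \sum_z A x z * A z y = A x y) ->
  psd A.
Proof.
move=> herm idem u; rewrite /form.
under eq_bigr => x _ do under eq_bigr => y _ do rewrite -idem mulr_sumr mulr_suml.
under eq_bigr => x _ do rewrite exchange_big.
rewrite exchange_big; apply: sumr_ge0 => z _.
rewrite (eq_bigr (fun x => (u x)^* * A x z * \sum_y A z y * u y)); last first.
  by move=> x _; rewrite mulr_sumr; apply: eq_bigr => y _; ring.
rewrite -mulr_suml.
have -> : \sum_x (u x)^* * A x z = (\sum_y A z y * u y)^*.
  by rewrite rmorph_sum; apply: eq_bigr => x _; rewrite rmorphM herm mulrC.
by rewrite mulrC mul_conjC_ge0.
Qed.

Section LiftOp.
Variables (n : nat) (S : {set 'I_n}) (P : subconf d S -> subconf d S -> C).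

Lemma agree_off_sym x y : agree_off S x y = agree_off S y x.
Proof. by apply/forallP/forallP => H i; have := H i; rewrite eq_sym. Qed.

Lemma agree_off_trans x y z : agree_off S x y -> agree_off S y z -> agree_off S x z.
Proof.
move=> /forallP hxy /forallP hyz; apply/forallP => i; apply/implyP => hi.
by have := hxy i; have := hyz i; rewrite hi /= => /eqP -> /eqP ->.
Qed.

Definition fill (x : tup n) (c : subconf d S) : tup n :=
  [tuple (if insub i is Some s then c s else tnth x i) | i < n].

Lemma fillP x c z : (restr S z == c) && agree_off S x z = (fill x c == z).
Proof.
apply/andP/eqP => [[/eqP <- /forallP xz]|<-].
  apply: eq_from_tnth => i; rewrite tnth_mktuple.
  case: insubP => [s _ <-|/negPf iS]; first by rewrite ffunE.
  by have := xz i; rewrite iS => /eqP.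
split; first by apply/eqP/ffunP => s; rewrite ffunE tnth_mktuple valK.
by apply/forallP => i; apply/implyP => iS; rewrite tnth_mktuple insubN.
Qed.

Lemma sum_agree_off x (G : subconf d S -> C) :
  \sum_z (agree_off S x z)%:R * G (restr S z) = \sum_c G c.
Proof.
under eq_bigr => z _ do
  rewrite -(sum_delta (restr S z) (fun c => (agree_off S x z)%:R * G c)).
rewrite exchange_big; apply: eq_bigr => c _.
under eq_bigr => z _ do rewrite mulrA -natrM mulnb fillP.
by rewrite sum_delta.
Qed.

Lemma local_lift_op : local_to S (lift_op P).
Proof.
split=> [x y xy|x y x' y' xx' yy' xy x'y']; rewrite /lift_op.
  by rewrite -/(agree_off S x y) (negbTE xy) mulr0.
rewrite -/(agree_off S x y) -/(agree_off S x' y') xy x'y'.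
have restrE z z' : agree_on S z z' -> restr S z = restr S z'.
  by move=> zz'; apply/ffunP => s; rewrite !ffunE zz' // (valP s).
by rewrite (restrE _ _ xx') (restrE _ _ yy').
Qed.

Hypothesis hP : is_projector P.

Lemma lift_op_herm x y : lift_op P y x = (lift_op P x y)^*.
Proof.
rewrite /lift_op -/(agree_off S x y) -/(agree_off S y x).
by rewrite rmorphM rmorph_nat agree_off_sym (proj1 hP).
Qed.

Lemma lift_op_idem x y : \sum_z lift_op P x z * lift_op P z y = lift_op P x y.
Proof.
rewrite /lift_op -/(agree_off S x y).
under eq_bigr => z _ do rewrite -/(agree_off S x z) -/(agree_off S z y).
have [xy|xy] := boolP (agree_off S x y); last first.
  rewrite mulr0 big1 // => z _.
  have [xz|_] := boolP (agree_off S x z); last by rewrite mulr0 mul0r.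
  have [zy|_] := boolP (agree_off S z y); last by rewrite [_ * false%:R]mulr0 mulr0.
  by have := agree_off_trans xz zy; rewrite (negbTE xy).
rewrite mulr1 -(proj2 hP) -(sum_agree_off x (fun c => P (restr S x) c * P c (restr S y))).
apply: eq_bigr => z _.
have -> : agree_off S z y = agree_off S x z.
  apply/idP/idP => [zy|xz]; first by rewrite (agree_off_trans xy) // agree_off_sym.
  by rewrite (@agree_off_trans z x y) // agree_off_sym.
by case: (agree_off S x z); rewrite ?mulr1 ?mul1r ?mulr0 ?mul0r.
Qed.

Lemma psd_lift_op : psd (lift_op P).
Proof. exact: psd_herm_idem lift_op_herm lift_op_idem. Qed.

End LiftOp.

Lemma trace_prod_proj_vec n (A : kern n) (psi : qvec C d n) :
  trace_prod A (proj_vec psi) = form A psi psi.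
Proof.
by apply: eq_bigr => x _; apply: eq_bigr => y _; rewrite /proj_vec; ring.
Qed.

Lemma trace_prod_mix n (I : finType) (A : kern n) (p : I -> C) (phi : I -> qvec C d n) :
  trace_prod A (mix p phi) = \sum_t p t * form A (phi t) (phi t).
Proof.
under [RHS]eq_bigr => t _ do rewrite mulr_sumr.
rewrite [RHS]exchange_big; apply: eq_bigr => x _.
under [RHS]eq_bigr => t _ do rewrite mulr_sumr.
rewrite [RHS]exchange_big; apply: eq_bigr => y _.
by rewrite /mix mulr_sumr; apply: eq_bigr => t _; ring.
Qed.

End Kernels.

Theorem theorem4 (C : numClosedFieldType) (d m : nat)
    (psi : qvec C d m.+1) (p : m.-tuple 'I_d -> C)
    (phi : m.-tuple 'I_d -> qvec C d m.+1)
    (S : {set 'I_m.+1}) (P : subconf d S -> subconf d S -> C) :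
  dotv psi psi = 1 ->
  is_RSD psi p phi ->
  (0 < #|S|)%N ->
  is_projector P ->
  (d%:R ^+ (#|S|.-1))^-1 * trace_prod (lift_op P) (proj_vec psi)
    <= trace_prod (lift_op P) (mix p phi).
Proof.
move=> _ hrsd _ hP; rewrite trace_prod_proj_vec trace_prod_mix.
have [d0|d_gt0] := posnP d.
  subst d; have form0 (A : kern C 0 m.+1) u v : form A u v = 0.
    by rewrite /form big1 // => x; case: (tnth x ord0).
  by rewrite form0 mulr0 big1 // => t _; rewrite form0 mulr0.
rewrite ler_pdivrMl ?exprn_gt0 ?ltr0n //.
exact: form_le_rsd hrsd (local_lift_op P) (psd_lift_op hP).
Qed.
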